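(* For every policy $\pi$, every bounded $V:\mathcal S\to\mathbb R$, every bounded heuristic $h$ and every $\lambda\in[0,1]$, $$\frac1{1-\gamma}\,\mathbb E_{(s,a)\sim d^\pi}\big[V(s)-(\widetilde{\mathcal B}V)(s,a)\big]=\lambda\big(V(d_0)-\widetilde V^\pi(d_0)\big)+\frac{1-\lambda}{1-\gamma}\big(V(d^\pi)-\widetilde V^\pi(d^\pi)\big).$$
   Context: Let $\mathcal M=(\mathcal S,\mathcal A,P,r,\gamma)$ be a discounted MDP with transition kernel $P(\cdot|s,a)$, reward $r:\mathcal S\times\mathcal A\to[0,1]$ and discount $\gamma\in[0,1)$. A policy $\pi$ is a Markov kernel from $\mathcal S$ to distributions on $\mathcal A$; $\rho^\pi(s)$ (resp. $\rho^\pi(d_0)$) is the trajectory law with $s_0=s$ (resp. $s_0\sim d_0$), $a_t\sim\pi(\cdot|s_t)$, $s_{t+1}\sim P(\cdot|s_t,a_t)$. For $V:\mathcal S\to\mathbb R$ and a distribution $d$, $V(d)=\mathbb E_{s\sim d}[V(s)]$. A fixed initial distribution $d_0$ is given; $d_t^\pi$ is the law of $s_t$ under $\rho^\pi(d_0)$, $d^\pi=(1-\gamma)\sum_t\gamma^td_t^\pi$, $d^\pi(s,a)=d^\pi(s)\pi(a|s)$. Reshaped MDP: $\widetilde{\mathcal M}=(\mathcal S,\mathcal A,P,\widetilde r,\widetilde\gamma)$ with $\widetilde r(s,a)=r(s,a)+(1-\lambda)\gamma\,\mathbb E_{s'\sim P(\cdot|s,a)}[h(s')]$, $\widetilde\gamma=\lambda\gamma$;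 $\widetilde V^\pi(s)=\mathbb E_{\rho^\pi(s)}[\sum_t(\lambda\gamma)^t\widetilde r(s_t,a_t)]$; and $(\widetilde{\mathcal B}V)(s,a)=\widetilde r(s,a)+\widetilde\gamma\,\mathbb E_{s'\sim P(\cdot|s,a)}[V(s')]$. *)

From HB Require Import structures.
From mathcomp Require Import all_boot all_order all_algebra.
From mathcomp Require Import all_classical all_reals all_analysis.

Set Implicit Arguments.
Unset Strict Implicit.
Unset Printing Implicit Defensive.

Import Order.TTheory GRing.Theory Num.Theory.
Local Open Scope classical_set_scope.
Local Open Scope ring_scope.

Definition expect {d} {T : measurableType d} {R : realType}
  (mu : {measure set T -> \bar R}) (f : T -> R) : R :=
  Rintegral mu setT f.

Definition rsum {R : realType} (u : nat -> R) : R :=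
  limn (fun n => \sum_(t < n) u t).

Section MDP.
Context {d1 d2 : measure_display} {S : measurableType d1} {A : measurableType d2}
  {R : realType}.

Definition Pexp (P : R.-pker (S * A) ~> S) (f : S -> R) : S * A -> R :=
  fun sa => expect (P sa) f.

Definition piexp (pi : R.-pker S ~> A) (g : S * A -> R) : S -> R :=
  fun s => expect (pi s) (fun a => g (s, a)).

Definition Mpi (P : R.-pker (S * A) ~> S) (pi : R.-pker S ~> A) (f : S -> R)
  : S -> R := piexp pi (Pexp P f).

(* E_{s ~ d_t^pi}[f s] where d_t^pi is the law of s_t under rho^pi(d0):
   d_0^pi = d0 and d_{t+1}^pi = law of s' with s ~ d_t^pi, a ~ pi(.|s),
   s' ~ P(.|s,a). *)
Fixpoint dt_expect (P : R.-pker (S * A) ~> S) (pi : R.-pker S ~> A)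
  (d0 : probability S R) (t : nat) (f : S -> R) : R :=
  match t with
  | O => expect d0 f
  | t'.+1 => dt_expect P pi d0 t' (Mpi P pi f)
  end.

Definition dpi_expect (P : R.-pker (S * A) ~> S) (pi : R.-pker S ~> A)
  (d0 : probability S R) (gamma : R) (f : S -> R) : R :=
  (1 - gamma) * rsum (fun t => gamma ^+ t * dt_expect P pi d0 t f).

Definition dpi_sa_expect (P : R.-pker (S * A) ~> S) (pi : R.-pker S ~> A)
  (d0 : probability S R) (gamma : R) (g : S * A -> R) : R :=
  dpi_expect P pi d0 gamma (piexp pi g).

Definition rtilde (P : R.-pker (S * A) ~> S) (r : S * A -> R) (h : S -> R)
  (gamma lambda : R) : S * A -> R :=
  fun sa => r sa + (1 - lambda) * gamma * Pexp P h sa.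

(* reshaped value  V~^pi(s) = E_{rho^pi(s)}[sum_t (lambda gamma)^t r~(s_t,a_t)]
   = sum_t (lambda gamma)^t E_{rho^pi(s)}[r~(s_t,a_t)], where
   E_{rho^pi(s)}[r~(s_t,a_t)] = (M^t (pi r~))(s). *)
Definition Vtilde (P : R.-pker (S * A) ~> S) (pi : R.-pker S ~> A)
  (r : S * A -> R) (h : S -> R) (gamma lambda : R) : S -> R :=
  fun s => rsum (fun t => (lambda * gamma) ^+ t *
             iter t (Mpi P pi) (piexp pi (rtilde P r h gamma lambda)) s).

Definition Btilde (P : R.-pker (S * A) ~> S) (r : S * A -> R) (h : S -> R)
  (gamma lambda : R) (V : S -> R) : S * A -> R :=
  fun sa => rtilde P r h gamma lambda sa + lambda * gamma * Pexp P V sa.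

End MDP.

From HB Require Import structures.
From mathcomp Require Import all_boot all_order all_algebra.
From mathcomp Require Import all_classical all_reals all_analysis.
From mathcomp Require Import measurable_realfun ring lra.

Import Order.TTheory GRing.Theory Num.Theory.
Import numFieldNormedType.Exports.
Local Open Scope classical_set_scope.
Local Open Scope ring_scope.

(* Write c = lambda gamma, g = pi r~ and M for the one-step state operator of
   pi.  The reshaped value V~ = sum_t c^t M^t g solves the Bellman equation
   V~ = g + c M V~, so pi (V - B~ V) = D - c M D with D = V - V~.  Since
   d_t^pi (M f) = d_(t+1)^pi f, the discounted sum
   sum_t gamma^t d_t^pi (D - c M D) telescopes to
   (1 - lambda) sum_t gamma^t d_t^pi D + lambda D(d_0).  Every function
   involved is bounded and measurable, which justifies exchanging limits and
   integrals by dominated convergence. *)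

Definition bounded_measurable {d} {T : measurableType d} {R : realType}
    (f : T -> R) :=
  measurable_fun setT f /\ exists K : R, forall x, `|f x| <= K.

Section BoundedMeasurable.
Context {d} {T : measurableType d} {R : realType}.
Implicit Types (f g : T -> R) (a : R).

Lemma bounded_measurable_cst a : bounded_measurable (fun _ : T => a).
Proof. by split => //; exists `|a|. Qed.

Lemma bounded_measurableD f g : bounded_measurable f -> bounded_measurable g ->
  bounded_measurable (fun x => f x + g x).
Proof.
move=> [mf [K hK]] [mg [L hL]]; split; first exact: measurable_funD.
by exists (K + L) => x; rewrite (le_trans (ler_normD _ _))// lerD.
Qed.

Lemma bounded_measurableB f g : bounded_measurable f -> bounded_measurable g ->
  bounded_measurable (fun x => f x - g x).
Proof.
move=> [mf [K hK]] [mg [L hL]]; split; first exact: measurable_funB.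
by exists (K + L) => x; rewrite (le_trans (ler_normB _ _))// lerD.
Qed.

Lemma bounded_measurableZ a f : bounded_measurable f ->
  bounded_measurable (fun x => a * f x).
Proof.
move=> [mf [K hK]]; split; first exact: measurable_funM.
by exists (`|a| * K) => x; rewrite normrM ler_wpM2l.
Qed.

Lemma bounded_measurable_sum (F : nat -> T -> R) n :
  (forall t, bounded_measurable (F t)) ->
  bounded_measurable (fun x => \sum_(t < n) F t x).
Proof.
move=> bF; elim: n => [|n IH].
  under eq_fun do rewrite big_ord0; exact: bounded_measurable_cst.
under eq_fun do rewrite big_ord_recr /=; exact: bounded_measurableD.
Qed.

Lemma bounded_fun_bounded_measurable f :
  measurable_fun setT f -> bounded_fun f -> bounded_measurable f.
Proof.
move=> mf [M [_ HM]]; split => //; exists (`|M| + 1) => x.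
by apply: (HM (`|M| + 1)) => //; have := ler_norm M; lra.
Qed.

Lemma cvg_measurable_bounded (f_ : nat -> T -> R) f K :
  (forall n, measurable_fun setT (f_ n)) -> (forall n x, `|f_ n x| <= K) ->
  (forall x, f_ n x @[n --> \oo] --> f x) ->
  measurable_fun setT f /\ forall x, `|f x| <= K.
Proof.
move=> mf_ hK cf; split; first by apply: (measurable_fun_cvg mf_) => x _.
move=> x; apply: (@closed_cvg _ _ \oo _ (fun n => `|f_ n x|) _ (@closed_le _ K)).
  by apply: nearW => n; exact: hK.
exact: cvg_norm.
Qed.

End BoundedMeasurable.

Section Expectation.
Context {d} {T : measurableType d} {R : realType}.
Context {mu : {measure set T -> \bar R}} (mu1 : mu setT = 1%E).
Implicit Types f g : T -> R.

Lemma integrable_bounded_measurable f :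
  bounded_measurable f -> mu.-integrable setT (EFin \o f).
Proof.
move=> [mf [K hK]]; apply/integrableP; split; first exact/measurable_EFinP.
apply: (le_lt_trans (integral_le_bound `|K|%:E _ _ _ _)) => //.
- exact/measurable_EFinP.
- by apply: aeW => x _ /=; rewrite lee_fin (le_trans (hK x))// ler_norm.
- by rewrite mu1 mule1 ltry.
Qed.

Lemma expectD f g : bounded_measurable f -> bounded_measurable g ->
  expect mu (fun x => f x + g x) = expect mu f + expect mu g.
Proof.
by move=> bf bg; rewrite /expect RintegralD//; exact: integrable_bounded_measurable.
Qed.

Lemma expectB f g : bounded_measurable f -> bounded_measurable g ->
  expect mu (fun x => f x - g x) = expect mu f - expect mu g.
Proof.
by move=> bf bg; rewrite /expect RintegralB//; exact: integrable_bounded_measurable.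
Qed.

Lemma expectZ a f : bounded_measurable f ->
  expect mu (fun x => a * f x) = a * expect mu f.
Proof.
by move=> bf; rewrite /expect RintegralZl//; exact: integrable_bounded_measurable.
Qed.

Lemma expect_cst a : expect mu (fun _ => a) = a.
Proof. by rewrite /expect Rintegral_cst// mu1 mulr1. Qed.

Lemma le_expect_norm f K : measurable_fun setT f ->
  (forall x, `|f x| <= K) -> `|expect mu f| <= K.
Proof.
move=> mf hK; have bf : bounded_measurable f by split => //; exists K.
have bnf : bounded_measurable (fun x => `|f x|).
  by split; [exact: measurableT_comp | exists K => x; rewrite normr_id].
rewrite (le_trans (le_normr_Rintegral _ _))//; first exact: integrable_bounded_measurable.
rewrite -[leRHS]expect_cst; apply: le_Rintegral => //.
- exact: integrable_bounded_measurable.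
- exact/integrable_bounded_measurable/bounded_measurable_cst.
Qed.

Lemma expect_cvg (f_ : nat -> T -> R) f K :
  (forall n, measurable_fun setT (f_ n)) -> (forall n x, `|f_ n x| <= K) ->
  (forall x, f_ n x @[n --> \oo] --> f x) ->
  expect mu (f_ n) @[n --> \oo] --> expect mu f.
Proof.
move=> mf_ hK cf; have [mf hKf] := cvg_measurable_bounded _ _ _ mf_ hK cf.
have bf : bounded_measurable f by split => //; exists K.
have cvg_int : (\int[mu]_x (f_ n x)%:E)%E @[n --> \oo] --> (\int[mu]_x (f x)%:E)%E.
  apply: (@dominated_cvg _ _ _ mu setT measurableT (fun n x => (f_ n x)%:E)
    (fun x => (f x)%:E) (fun=> K%:E)) => //.
  - by move=> n; exact/measurable_EFinP.
  - by move=> x _; apply/fine_cvgP; split; [exact: nearW | exact: cf].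
  - exact/integrable_bounded_measurable/bounded_measurable_cst.
  - by move=> n x _ /=; rewrite lee_fin.
rewrite /expect /Rintegral; move: cvg_int.
rewrite -(fineK (integrable_fin_num measurableT (integrable_bounded_measurable _ bf))).
exact: fine_cvg.
Qed.

End Expectation.

Section KernelExpectation.
Context {d d'} {X : measurableType d} {Y : measurableType d'} {R : realType}.
Variable k : R.-pker X ~> Y.

Lemma bounded_measurable_section (g : X * Y -> R) x :
  bounded_measurable g -> bounded_measurable (fun y => g (x, y)).
Proof.
move=> [mg [K hK]]; split; last by exists K.
exact: measurable_fun_pair2.
Qed.

Lemma bounded_measurable_kernel_expect (g : X * Y -> R) :
  bounded_measurable g ->
  bounded_measurable (fun x => expect (k x) (fun y => g (x, y))).
Proof.
move=> bg; have [mg [K hK]] := bg; have k1 x := @prob_kernel _ _ _ _ _ k x.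
split; last first.
  exists K => x; apply: (le_expect_norm (k1 x)) => [|y]; last exact: hK.
  exact: (bounded_measurable_section _ x bg).1.
(* shifting g by |K| makes it nonnegative, so the kernel integral is measurable *)
pose K' := `|K|.
have shift x : expect (k x) (fun y => g (x, y)) =
    fine (\int[k x]_y ((g (x, y) + K')%:E)) - K'.
  rewrite -[fine _]/(expect (k x) (fun y => g (x, y) + K')).
  rewrite (expectD (k1 x)) ?(expect_cst (k1 x)) ?addrK //.
  - exact: bounded_measurable_section.
  - exact: bounded_measurable_cst.
under eq_fun do rewrite shift.
apply: measurable_funB => //; apply: measurableT_comp => //.
apply: (measurable_fun_integral_finite_kernel (fun xy => (g xy + K')%:E)).
- move=> z; rewrite lee_fin /K'.
  have := hK z; rewrite ler_norml => /andP[+ _].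
  by have := ler_norm K; lra.
- exact/measurable_EFinP/measurable_funD.
Qed.

End KernelExpectation.

Section DiscountedSeries.
Context {R : realType}.
Implicit Types (u v : nat -> R) (c : R).

Lemma sum_geometric_le c n : 0 <= c < 1 -> \sum_(t < n) c ^+ t <= (1 - c)^-1.
Proof.
move=> /andP[c0 c1]; have c1' : 0 < 1 - c by lra.
rewrite -(ler_pM2l c1') mulfV ?gt_eqF// -opprB mulNr -subrX1 opprB.
by have := exprn_ge0 n c0; lra.
Qed.

Lemma is_cvg_sum_geometric_dominated u B c : 0 <= c < 1 ->
  (forall t, `|u t| <= B * c ^+ t) -> cvgn (fun n => \sum_(t < n) u t).
Proof.
move=> /andP[c0 c1] hu.
have B0 : 0 <= B by rewrite -[B]mulr1 -(expr0 c) (le_trans _ (hu 0%N)).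
have -> : (fun n => \sum_(t < n) u t) = series u.
  by apply: funext => n; rewrite /series /= big_mkord.
apply/normed_cvg/(@series_le_cvg _ _ (geometric B c)) => n.
- exact: normr_ge0.
- by rewrite /geometric /= mulr_ge0 ?exprn_ge0.
- exact: hu.
- by apply: is_cvg_geometric_series; rewrite ger0_norm.
Qed.

Lemma rsumB u v : cvgn (fun n => \sum_(t < n) u t) ->
  cvgn (fun n => \sum_(t < n) v t) ->
  rsum (fun t => u t - v t) = rsum u - rsum v.
Proof.
move=> cu cv; apply: cvg_lim => //.
under eq_fun do rewrite sumrB; exact: cvgB.
Qed.

Lemma rsum_sub_shift u (a : R) : cvgn (fun n => \sum_(t < n) u t) ->
  rsum (fun t => u t - a * u t.+1) = (1 - a) * rsum u + a * u 0%N.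
Proof.
move=> cu; apply: cvg_lim => //.
have -> : (1 - a) * rsum u + a * u 0%N = rsum u - a * (rsum u - u 0%N) by ring.
have -> : (fun n => \sum_(t < n) (u t - a * u t.+1)) =
    (fun n => \sum_(t < n) u t - a * (\sum_(t < n.+1) u t - u 0%N)).
  by apply: funext => n; rewrite sumrB -mulr_sumr big_ord_recl [u ord0 + _]addrC addrK.
apply: cvgB; first exact: cu.
apply: cvgMl_tmp; apply: cvgB; last exact: cvg_cst.
by move: cu; rewrite -cvg_shiftS.
Qed.

End DiscountedSeries.

Section MarkovPolicy.
Context {d1 d2 : measure_display} {S : measurableType d1} {A : measurableType d2}
  {R : realType} (P : R.-pker (S * A) ~> S) (pi : R.-pker S ~> A).
Implicit Types f g : S -> R.

Let P1 sa : P sa setT = 1%E. Proof. exact: prob_kernel. Qed.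
Let pi1 s : pi s setT = 1%E. Proof. exact: prob_kernel. Qed.

Lemma bounded_measurable_Pexp f :
  bounded_measurable f -> bounded_measurable (Pexp P f).
Proof.
move=> [mf [K hK]]; apply: (bounded_measurable_kernel_expect P (fun p => f p.2)).
by split; [exact: measurableT_comp | exists K => p; exact: hK].
Qed.

Lemma bounded_measurable_piexp (g : S * A -> R) :
  bounded_measurable g -> bounded_measurable (piexp pi g).
Proof. exact: bounded_measurable_kernel_expect. Qed.

Lemma bounded_measurable_Mpi f :
  bounded_measurable f -> bounded_measurable (Mpi P pi f).
Proof. by move=> bf; apply/bounded_measurable_piexp/bounded_measurable_Pexp. Qed.

Lemma le_Mpi_norm f K : measurable_fun setT f -> (forall s, `|f s| <= K) ->
  forall s, `|Mpi P pi f s| <= K.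
Proof.
move=> mf hK s; have bf : bounded_measurable f by split => //; exists K.
apply: (le_expect_norm (pi1 s)) => [|a].
  exact: (bounded_measurable_section _ s (bounded_measurable_Pexp _ bf)).1.
exact: (le_expect_norm (P1 _)).
Qed.

Lemma MpiD f g : bounded_measurable f -> bounded_measurable g ->
  Mpi P pi (fun s => f s + g s) = fun s => Mpi P pi f s + Mpi P pi g s.
Proof.
move=> bf bg; apply: funext => s; rewrite /Mpi /piexp /Pexp.
under eq_fun do rewrite (expectD (P1 _)) //.
apply: (expectD (pi1 s));
  exact: (bounded_measurable_section _ s (bounded_measurable_Pexp _ _)).
Qed.

Lemma MpiZ a f : bounded_measurable f ->
  Mpi P pi (fun s => a * f s) = fun s => a * Mpi P pi f s.
Proof.
move=> bf; apply: funext => s; rewrite /Mpi /piexp /Pexp.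
under eq_fun do rewrite (expectZ (P1 _)) //.
apply: (expectZ (pi1 s));
  exact: (bounded_measurable_section _ s (bounded_measurable_Pexp _ _)).
Qed.

Lemma MpiB f g : bounded_measurable f -> bounded_measurable g ->
  Mpi P pi (fun s => f s - g s) = fun s => Mpi P pi f s - Mpi P pi g s.
Proof.
move=> bf bg; apply: funext => s; rewrite /Mpi /piexp /Pexp.
under eq_fun do rewrite (expectB (P1 _)) //.
apply: (expectB (pi1 s));
  exact: (bounded_measurable_section _ s (bounded_measurable_Pexp _ _)).
Qed.

Lemma Mpi_cvg (f_ : nat -> S -> R) f K :
  (forall n, measurable_fun setT (f_ n)) -> (forall n s, `|f_ n s| <= K) ->
  (forall s, f_ n s @[n --> \oo] --> f s) ->
  forall s, Mpi P pi (f_ n) s @[n --> \oo] --> Mpi P pi f s.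
Proof.
move=> mf_ hK cf s; have bf n : bounded_measurable (f_ n) by split => //; exists K.
apply: (expect_cvg (pi1 s) _ _ K).
- by move=> n; exact: (bounded_measurable_section _ s (bounded_measurable_Pexp _ (bf n))).1.
- by move=> n a; exact: (le_expect_norm (P1 _)).
- by move=> a; exact: (expect_cvg (P1 _) _ _ K).
Qed.

Lemma Mpi_cst a : Mpi P pi (fun _ => a) = fun _ => a.
Proof.
apply: funext => s; rewrite /Mpi /piexp /Pexp.
by under eq_fun do rewrite (expect_cst (P1 _)); exact: (expect_cst (pi1 s)).
Qed.

Lemma Mpi_sum (F : nat -> S -> R) n : (forall t, bounded_measurable (F t)) ->
  Mpi P pi (fun s => \sum_(t < n) F t s) = fun s => \sum_(t < n) Mpi P pi (F t) s.
Proof.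
move=> bF; elim: n => [|n IH].
  under eq_fun do rewrite big_ord0; rewrite Mpi_cst.
  by under [RHS]eq_fun do rewrite big_ord0.
under eq_fun do rewrite big_ord_recr /=.
rewrite MpiD ?IH //; last exact: bounded_measurable_sum.
by apply: funext => s; rewrite big_ord_recr.
Qed.

Lemma piexp_bellman_residual (rt : S * A -> R) c V W :
  bounded_measurable rt -> bounded_measurable V -> bounded_measurable W ->
  (forall s, W s = piexp pi rt s + c * Mpi P pi W s) ->
  piexp pi (fun sa => V sa.1 - (rt sa + c * Pexp P V sa))
  = fun s => V s - W s - c * Mpi P pi (fun s => V s - W s) s.
Proof.
move=> brt bV bW bellW; apply: funext => s; rewrite MpiB // bellW.
have brt_s := bounded_measurable_section _ s brt.
have bPV_s := bounded_measurable_section _ s (bounded_measurable_Pexp _ bV).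
rewrite /piexp (expectB (pi1 s)) ?(expectD (pi1 s)) ?(expectZ (pi1 s)) //=.
- by rewrite (expect_cst (pi1 s)) /Mpi /piexp; ring.
- exact: bounded_measurableZ.
- exact: bounded_measurable_cst.
- by apply: bounded_measurableD => //; exact: bounded_measurableZ.
Qed.

Definition discounted_value c g s :=
  rsum (fun t => c ^+ t * iter t (Mpi P pi) g s).

Section DiscountedValue.
Context {c : R} {g : S -> R} {K : R}.
Hypotheses (hc : 0 <= c < 1) (mg : measurable_fun setT g)
  (hgK : forall s, `|g s| <= K).

Lemma bounded_measurable_iter_Mpi t : bounded_measurable (iter t (Mpi P pi) g).
Proof.
elim: t => [|t IH]; last exact: bounded_measurable_Mpi.
by split => //; exists K.
Qed.

Lemma le_iter_Mpi_norm t s : `|iter t (Mpi P pi) g s| <= K.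
Proof.
elim: t s => [|t IH] s //=.
exact: (le_Mpi_norm _ _ (bounded_measurable_iter_Mpi t).1 IH).
Qed.

Lemma le_discounted_partial_norm n s :
  `|\sum_(t < n) c ^+ t * iter t (Mpi P pi) g s| <= K * (1 - c)^-1.
Proof.
have [c0 _] := andP hc.
rewrite (le_trans (ler_norm_sum _ _ _))//.
apply: (@le_trans _ _ (\sum_(t < n) K * c ^+ t)).
  apply: ler_sum => t _; rewrite normrM ger0_norm ?exprn_ge0// mulrC.
  by rewrite ler_wpM2r ?exprn_ge0 ?le_iter_Mpi_norm.
rewrite -mulr_sumr ler_wpM2l ?sum_geometric_le //.
exact: le_trans (normr_ge0 _) (hgK s).
Qed.

Lemma cvg_discounted_partial s :
  \sum_(t < n) c ^+ t * iter t (Mpi P pi) g s @[n --> \oo] -->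
  discounted_value c g s.
Proof.
have [c0 _] := andP hc.
apply: (is_cvg_sum_geometric_dominated _ K c hc) => t.
by rewrite normrM ger0_norm ?exprn_ge0// mulrC ler_wpM2r ?exprn_ge0 ?le_iter_Mpi_norm.
Qed.

Lemma bounded_measurable_discounted_value : bounded_measurable (discounted_value c g).
Proof.
have [mV hV] := cvg_measurable_bounded _ _ _ (fun n => (bounded_measurable_sum _ n
  (fun t => bounded_measurableZ (c ^+ t) _ (bounded_measurable_iter_Mpi t))).1)
  le_discounted_partial_norm cvg_discounted_partial.
by split => //; exists (K * (1 - c)^-1).
Qed.

Lemma discounted_value_bellman s :
  discounted_value c g s = g s + c * Mpi P pi (discounted_value c g) s.
Proof.
have bG t := bounded_measurableZ (c ^+ t) _ (bounded_measurable_iter_Mpi t).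
have partialS n : \sum_(t < n.+1) c ^+ t * iter t (Mpi P pi) g s =
    g s + c * Mpi P pi (fun s => \sum_(t < n) c ^+ t * iter t (Mpi P pi) g s) s.
  rewrite (Mpi_sum (fun t s => c ^+ t * iter t (Mpi P pi) g s)) //.
  rewrite big_ord_recl mulr_sumr /=; congr (_ + _).
    by rewrite expr0 mul1r.
  apply: eq_bigr => t _; rewrite MpiZ; last exact: bounded_measurable_iter_Mpi.
  by rewrite mulrA -exprS.
have lim_partial := cvg_discounted_partial s; rewrite -cvg_shiftS in lim_partial.
suff lim_bellman : \sum_(t < n.+1) c ^+ t * iter t (Mpi P pi) g s @[n --> \oo] -->
    g s + c * Mpi P pi (discounted_value c g) s.
  exact: cvg_unique lim_partial lim_bellman.
under eq_fun do rewrite partialS.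
apply: cvgD; first exact: cvg_cst.
apply: cvgMl_tmp; apply: (Mpi_cvg _ _ _ _ le_discounted_partial_norm cvg_discounted_partial).
by move=> n; exact: (bounded_measurable_sum _ n bG).1.
Qed.

End DiscountedValue.

Section StateDistribution.
Variable d0 : probability S R.

Let d01 : d0 setT = 1%E. Proof. exact: probability_setT. Qed.

Lemma dt_expectB t f g : bounded_measurable f -> bounded_measurable g ->
  dt_expect P pi d0 t (fun s => f s - g s)
  = dt_expect P pi d0 t f - dt_expect P pi d0 t g.
Proof.
elim: t f g => [|t IH] f g bf bg /=; first exact: (expectB d01).
by rewrite MpiB // IH //; exact: bounded_measurable_Mpi.
Qed.

Lemma dt_expectZ t a f : bounded_measurable f ->
  dt_expect P pi d0 t (fun s => a * f s) = a * dt_expect P pi d0 t f.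
Proof.
elim: t f => [|t IH] f bf /=; first exact: (expectZ d01).
by rewrite MpiZ // IH //; exact: bounded_measurable_Mpi.
Qed.

Lemma le_dt_expect_norm t f K : measurable_fun setT f ->
  (forall s, `|f s| <= K) -> `|dt_expect P pi d0 t f| <= K.
Proof.
elim: t f => [|t IH] f mf hK /=; first exact: (le_expect_norm d01).
have bf : bounded_measurable f by split => //; exists K.
by apply: IH; [exact: (bounded_measurable_Mpi _ bf).1 | exact: le_Mpi_norm].
Qed.

Lemma is_cvg_discounted_dt_expect gamma f : 0 <= gamma < 1 ->
  bounded_measurable f ->
  cvgn (fun n => \sum_(t < n) gamma ^+ t * dt_expect P pi d0 t f).
Proof.
move=> hgamma [mf [K hK]]; have gamma0 := (andP hgamma).1.
apply: (is_cvg_sum_geometric_dominated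
  (fun t => gamma ^+ t * dt_expect P pi d0 t f) K gamma hgamma) => t.
rewrite normrM ger0_norm ?exprn_ge0 // mulrC ler_wpM2r ?exprn_ge0 //.
exact: le_dt_expect_norm.
Qed.

Lemma dpi_expectB gamma f g : 0 <= gamma < 1 ->
  bounded_measurable f -> bounded_measurable g ->
  dpi_expect P pi d0 gamma (fun s => f s - g s)
  = dpi_expect P pi d0 gamma f - dpi_expect P pi d0 gamma g.
Proof.
move=> hgamma bf bg; rewrite /dpi_expect -mulrBr -rsumB;
  try exact: is_cvg_discounted_dt_expect.
by congr (_ * rsum _); apply: funext => t; rewrite dt_expectB // mulrBr.
Qed.

Lemma dpi_expect_sub_Mpi gamma lambda D : 0 <= gamma < 1 ->
  bounded_measurable D ->
  dpi_expect P pi d0 gamma (fun s => D s - lambda * gamma * Mpi P pi D s)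
  = (1 - lambda) * dpi_expect P pi d0 gamma D
    + lambda * (1 - gamma) * expect d0 D.
Proof.
move=> hgamma bD; rewrite /dpi_expect.
have -> : (fun t => gamma ^+ t * dt_expect P pi d0 t
      (fun s => D s - lambda * gamma * Mpi P pi D s)) =
    (fun t => gamma ^+ t * dt_expect P pi d0 t D
      - lambda * (gamma ^+ t.+1 * dt_expect P pi d0 t.+1 D)).
  apply: funext => t; rewrite dt_expectB ?dt_expectZ /=.
  - by rewrite exprS; ring.
  - exact: bounded_measurable_Mpi.
  - exact: bD.
  - by apply: bounded_measurableZ; exact: bounded_measurable_Mpi.
rewrite rsum_sub_shift; last exact: is_cvg_discounted_dt_expect.
by rewrite /= expr0 mul1r; ring.
Qed.

End StateDistribution.

End MarkovPolicy.

Theorem mainTheorem12 (d1 d2 : measure_display) (S : measurableType d1)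
  (A : measurableType d2) (R : realType)
  (P : R.-pker (S * A) ~> S) (r : S * A -> R) (gamma : R)
  (d0 : probability S R)
  (hr_meas : measurable_fun setT r) (hr01 : forall sa, 0 <= r sa <= 1)
  (hgamma : 0 <= gamma < 1)
  (pi : R.-pker S ~> A) (V : S -> R) (h : S -> R) (lambda : R)
  (hV_meas : measurable_fun setT V) (hV_bdd : bounded_fun V)
  (hh_meas : measurable_fun setT h) (hh_bdd : bounded_fun h)
  (hlambda : 0 <= lambda <= 1) :
  (1 - gamma)^-1 *
    dpi_sa_expect P pi d0 gamma
      (fun sa => V sa.1 - Btilde P r h gamma lambda V sa)
  = lambda * (expect d0 V - expect d0 (Vtilde P pi r h gamma lambda))
    + (1 - lambda) / (1 - gamma) *
      (dpi_expect P pi d0 gamma V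
       - dpi_expect P pi d0 gamma (Vtilde P pi r h gamma lambda)).
Proof.
have c01 : 0 <= lambda * gamma < 1.
  by move: hgamma hlambda => /andP[? ?] /andP[? ?]; apply/andP; split; nra.
have bV := bounded_fun_bounded_measurable _ hV_meas hV_bdd.
have bh := bounded_fun_bounded_measurable _ hh_meas hh_bdd.
have br : bounded_measurable r.
  by split => //; exists 1 => sa; have /andP[r0 r1] := hr01 sa; rewrite ger0_norm.
have brt : bounded_measurable (rtilde P r h gamma lambda).
  by apply: bounded_measurableD => //; apply/bounded_measurableZ/bounded_measurable_Pexp.
have [mg [K hgK]] := bounded_measurable_piexp pi _ brt.
have bVt := bounded_measurable_discounted_value P pi c01 mg hgK.
have bellman := discounted_value_bellman P pi c01 mg hgK.
rewrite /dpi_sa_expect (piexp_bellman_residual _ _ _ _ _ _ brt bV bVt bellman).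
rewrite dpi_expect_sub_Mpi ?dpi_expectB ?(expectB (probability_setT d0)) //;
  last exact: bounded_measurableB.
have gamma_neq1 : 1 - gamma != 0 by rewrite subr_eq0 gt_eqF // (andP hgamma).2.
by field.
Qed.
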